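(* Assume $b<0$ and $a>0$, and let $(J,E)\in D_1$. Then, as $E\to E_+(J)$, \[ \lim_{E\to E_+(J)}T(J,E)=+\infty,\qquad \lim_{E\to E_+(J)}\tilde M(J,E)=+\infty,\qquad \lim_{E\to E_+(J)}\frac{\tilde M(J,E)}{T(J,E)}=\frac{q^2-a}{2b}, \] \[ \lim_{E\to E_+(J)}\tilde P(J,E)=+\infty,\qquad \lim_{E\to E_+(J)}\frac{\tilde P(J,E)}{T(J,E)}=\frac{q(q^2-a)}{2b}. \]
   Context: Consider the profile equation $u_{xx}+au+b|u|^2u=0$ (defocusing case $b<0$, with $a>0$), with conserved angular momentum $J=\Im(u\bar u_x)$ and energy $E=\frac12|u_x|^2+\frac a2|u|^2+\frac b4|u|^4$; without loss of generality $J\ge 0$. Writing $u=re^{i\phi}$, one has $E=\frac{r_x^2}{2}+V_J(r)$ with potential $V_J(r)=\frac{J^2}{2r^2}+a\frac{r^2}{2}+b\frac{r^4}{4}$. For $0<J<\sqrt{\frac{4}{27}\frac{a^3}{b^2}}$, parametrize $J=q\frac{q^2-a}{b}=Q\frac{Q^2-a}{b}$ with $0<q^2<\frac a3<Q^2<a$ ($q,Q$ of the same sign as $J$), and set $E_-(J)=\frac{1}{4b}(Q^2-a)(3Q^2+a)$ (local minimum value of $V_J$) and $E_+(J)=\frac{1}{4b}(q^2-a)(3q^2+a)$ (local maximum value of $V_J$). The domain is $D_1=\{(J,E)\in\mathbb R^2:0<J<\sqrt{\frac{4}{27}\frac{a^3}{b^2}},\ E_-(J)<E<E_+(J)\}$.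 For $(J,E)\in D_1$, let $r_1<r_2<r_3$ be the three positive roots of $E-V_J(r)$, and define the period, mass and momentum of the corresponding solution by $T(J,E)=2\int_{r_1}^{r_2}\frac{dr}{\sqrt{2(E-V_J(r))}}$, $\tilde M(J,E)=\frac12\int_0^{T}|u|^2dx=\int_{r_1}^{r_2}\frac{r^2\,dr}{\sqrt{2(E-V_J(r))}}$, $\tilde P(J,E)=\frac12\Im\int_0^T u\bar u_x\,dx=\frac12 T(J,E)J$. *)

From Stdlib Require Import Reals Lra ClassicalEpsilon.
From Coquelicot Require Import Coquelicot.
Open Scope R_scope.

Definition VJ (a b J r : R) : R :=
  J ^ 2 / (2 * r ^ 2) + a * r ^ 2 / 2 + b * r ^ 4 / 4.

Definition three_roots (a b J E : R) (t : R * R * R) : Prop :=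
  let '(r1, r2, r3) := t in
  0 < r1 /\ r1 < r2 /\ r2 < r3 /\
  (forall r, 0 < r -> (E - VJ a b J r = 0 <-> (r = r1 \/ r = r2 \/ r = r3))).

Definition roots (a b J E : R) : R * R * R :=
  epsilon (inhabits (0, 0, 0)) (three_roots a b J E).

Definition root1 a b J E : R := fst (fst (roots a b J E)).
Definition root2 a b J E : R := snd (fst (roots a b J E)).

Definition Tper (a b J E : R) : R :=
  2 * RInt_gen (fun r => / sqrt (2 * (E - VJ a b J r)))
        (at_right (root1 a b J E)) (at_left (root2 a b J E)).

Definition Mtil (a b J E : R) : R :=
  RInt_gen (fun r => r ^ 2 / sqrt (2 * (E - VJ a b J r)))
        (at_right (root1 a b J E)) (at_left (root2 a b J E)).

Definition Ptil (a b J E : R) : R := / 2 * Tper a b J E * J.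

Definition Eplus_J (a b q : R) : R := / (4 * b) * (q ^ 2 - a) * (3 * q ^ 2 + a).

From Stdlib Require Import Reals Lra ClassicalEpsilon.
From Coquelicot Require Import Coquelicot.
Open Scope R_scope.

(* With [s = r^2] one has [E - V_J(r) = P_E(s) / s] for a cubic [P_E] which, at
   [E = E_+(J)], has the double root [rho = (q^2 - a) / b] (where [V_J] has its
   local maximum) and a simple root [sig < rho].  For [E] slightly below [E_+(J)]
   its roots are [s1 < s2 < rho < s3], and [r_i = sqrt s_i].  At [r1] and [r2] the
   integrands blow up only like inverse square roots, so the integrals converge;
   with the weight [rho - r^2] they even stay bounded uniformly in [E], which
   gives [M~ = rho T / 2 + O(1)].  On the other hand [2 (E - V_J(r))] is at most
   [8 c rho (sqrt rho - r)^2] with [c = - b / 4], so [T] grows like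
   [- ln (sqrt rho - r2)], which diverges as [r2 -> sqrt rho].  All five limits
   follow from these two facts and [P~ = J T / 2]. *)

Lemma at_right_interval (x d : R) (P : R -> Prop) :
  0 < d -> (forall y, x < y < x + d -> P y) -> at_right x P.
Proof.
  intros Hd HP. exists (mkposreal d Hd). intros y Hy Hxy. apply HP.
  change (Rabs (y - x) < d) in Hy. apply Rabs_def2 in Hy. lra.
Qed.

Lemma at_left_interval (x d : R) (P : R -> Prop) :
  0 < d -> (forall y, x - d < y < x -> P y) -> at_left x P.
Proof.
  intros Hd HP. exists (mkposreal d Hd). intros y Hy Hxy. apply HP.
  change (Rabs (y - x) < d) in Hy. apply Rabs_def2 in Hy. lra.
Qed.

Lemma at_left_lt (x : R) : at_left x (fun y => y < x).
Proof. apply at_left_interval with 1; [lra | intros; lra]. Qed.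

Lemma filterlim_p_infty_intro {T : Type} {F : (T -> Prop) -> Prop} {FF : Filter F} (f : T -> R) :
  (forall N, F (fun x => N < f x)) -> filterlim f F (Rbar_locally p_infty).
Proof. intros H P [M HM]. apply filter_imp with (2 := H M). intros x Hx. exact (HM _ Hx). Qed.

Lemma filterlim_p_infty_gt {T : Type} {F : (T -> Prop) -> Prop} {FF : Filter F} (f : T -> R) :
  filterlim f F (Rbar_locally p_infty) -> forall N, F (fun x => N < f x).
Proof. intros Hf N. apply Hf. exists N. auto. Qed.

Lemma filterlim_p_infty_affine {T : Type} {F : (T -> Prop) -> Prop} {FF : Filter F}
  (f : T -> R) (al be : R) :
  0 < al -> filterlim f F (Rbar_locally p_infty) ->
  filterlim (fun x => al * f x + be) F (Rbar_locally p_infty).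
Proof.
  intros Hal Hf. apply filterlim_p_infty_intro. intros N.
  apply filter_imp with (2 := filterlim_p_infty_gt f Hf ((N - be) / al)).
  intros x Hx. apply Rlt_div_l in Hx; [|lra]. lra.
Qed.

Lemma filterlim_div_of_bounded_gap {T : Type} {F : (T -> Prop) -> Prop} {FF : Filter F}
  (f g : T -> R) (al B : R) :
  filterlim g F (Rbar_locally p_infty) -> F (fun x => Rabs (f x - al * g x) <= B) ->
  filterlim (fun x => f x / g x) F (locally al).
Proof.
  intros Hg HB. apply filterlim_locally. intros [eps Heps].
  generalize (filter_and _ _ (filterlim_p_infty_gt g Hg (Rabs B / eps)) HB).
  apply filter_imp. intros x [Hgx Hx]. change (Rabs (f x / g x - al) < eps).
  assert (0 <= Rabs B / eps) by (apply Rdiv_le_0_compat; [apply Rabs_pos | lra]).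
  assert (hg : 0 < g x) by lra.
  apply Rlt_div_l in Hgx; [|lra].
  replace (f x / g x - al) with ((f x - al * g x) / g x) by (field; lra).
  rewrite Rabs_div, (Rabs_pos_eq (g x)) by lra.
  apply Rlt_div_l; [lra|]. pose proof (Rle_abs B). nra.
Qed.

(** * Integrals with inverse square root singularities *)

Lemma ex_RInt_open_interval (h : R -> R) (al be x y : R) :
  (forall r, al < r < be -> continuous h r) ->
  al < x < be -> al < y < be -> ex_RInt h x y.
Proof.
  intros Hc Hx Hy. apply (ex_RInt_continuous (V := R_CompleteNormedModule)).
  intros z Hz. apply Hc. split.
  - apply Rlt_le_trans with (Rmin x y); [apply Rmin_glb_lt|]; lra.
  - apply Rle_lt_trans with (Rmax x y); [|apply Rmax_lub_lt]; lra.
Qed.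

Lemma le_inv_sqrt_singularity (al be K h r : R) :
  al < r < be -> 0 <= h -> 0 <= K -> h ^ 2 * ((r - al) * (be - r)) <= K ^ 2 ->
  h <= K / sqrt (be - al) * (/ sqrt (r - al) + / sqrt (be - r)).
Proof.
  intros Hr Hh HK Hsq.
  set (u := sqrt (r - al)); set (v := sqrt (be - r)); set (w := sqrt (be - al)).
  assert (hu : 0 < u) by (apply sqrt_lt_R0; lra).
  assert (hv : 0 < v) by (apply sqrt_lt_R0; lra).
  assert (hw : 0 < w) by (apply sqrt_lt_R0; lra).
  assert (hu2 : u * u = r - al) by (apply sqrt_sqrt; lra).
  assert (hv2 : v * v = be - r) by (apply sqrt_sqrt; lra).
  assert (hw2 : w * w = be - al) by (apply sqrt_sqrt; lra).
  assert (huv : h * (u * v) <= K).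
  { apply Rsqr_incr_0_var; [|lra]. unfold Rsqr.
    replace (h * (u * v) * (h * (u * v))) with (h ^ 2 * ((u * u) * (v * v))) by ring.
    rewrite hu2, hv2. lra. }
  assert (hwuv : w <= u + v) by (apply Rsqr_incr_0_var; unfold Rsqr; nra).
  replace (K / w * (/ u + / v)) with (K * (u + v) / (w * (u * v))) by (field; lra).
  apply Rle_div_r; [apply Rmult_lt_0_compat; nra|].
  apply Rle_trans with (K * w); nra.
Qed.

Lemma is_RInt_inv_sqrt_singularity (al be x y : R) :
  al < x -> x <= y -> y < be ->
  is_RInt (fun r => / sqrt (r - al) + / sqrt (be - r)) x y
    (2 * (sqrt (y - al) - sqrt (x - al)) + 2 * (sqrt (be - x) - sqrt (be - y))).
Proof.
  intros Hx Hxy Hy.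
  replace (2 * (sqrt (y - al) - sqrt (x - al)) + 2 * (sqrt (be - x) - sqrt (be - y)))
    with (minus (2 * sqrt (y - al) - 2 * sqrt (be - y)) (2 * sqrt (x - al) - 2 * sqrt (be - x)))
    by (unfold minus, plus, opp; simpl; ring).
  apply (is_RInt_derive (fun r => 2 * sqrt (r - al) - 2 * sqrt (be - r))).
  - intros r Hr. rewrite Rmin_left, Rmax_right in Hr by lra.
    auto_derive; [lra|].
    replace (r + - al) with (r - al) by ring. replace (be + - r) with (be - r) by ring.
    field. split; apply Rgt_not_eq, sqrt_lt_R0; lra.
  - intros r Hr. rewrite Rmin_left, Rmax_right in Hr by lra.
    apply (ex_derive_continuous (fun r => / sqrt (r - al) + / sqrt (be - r))).
    auto_derive. repeat split; try lra; apply Rgt_not_eq, sqrt_lt_R0; lra.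
Qed.

Lemma RInt_le_inv_sqrt_singularity (h : R -> R) (al be K x y : R) :
  0 <= K ->
  (forall r, al < r < be -> continuous h r) ->
  (forall r, al < r < be -> 0 <= h r) ->
  (forall r, al < r < be -> h r ^ 2 * ((r - al) * (be - r)) <= K ^ 2) ->
  al < x -> x <= y -> y < be -> RInt h x y <= 4 * K.
Proof.
  intros HK Hc Hp Hb Hx Hxy Hy.
  assert (hw : 0 < sqrt (be - al)) by (apply sqrt_lt_R0; lra).
  set (g := fun r => / sqrt (r - al) + / sqrt (be - r)).
  assert (Hg := is_RInt_inv_sqrt_singularity al be x y Hx Hxy Hy). fold g in Hg.
  set (k := K / sqrt (be - al)).
  assert (Hkg : is_RInt (fun r => k * g r) x y
                  (k * (2 * (sqrt (y - al) - sqrt (x - al)) + 2 * (sqrt (be - x) - sqrt (be - y)))))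
    by exact (is_RInt_scal g x y k _ Hg).
  apply Rle_trans with (RInt (fun r => k * g r) x y).
  - apply RInt_le; [lra | apply (ex_RInt_open_interval h al be); auto; lra | eexists; exact Hkg |].
    intros r Hr. apply le_inv_sqrt_singularity; [lra | apply Hp; lra | exact HK | apply Hb; lra].
  - rewrite (is_RInt_unique _ _ _ _ Hkg).
    assert (sqrt (y - al) <= sqrt (be - al)) by (apply sqrt_le_1_alt; lra).
    assert (sqrt (be - x) <= sqrt (be - al)) by (apply sqrt_le_1_alt; lra).
    assert (0 <= sqrt (x - al)) by apply sqrt_pos.
    assert (0 <= sqrt (be - y)) by apply sqrt_pos.
    apply Rle_trans with (k * (4 * sqrt (be - al))).
    + apply Rmult_le_compat_l; [apply Rdiv_le_0_compat|]; lra.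
    + right. unfold k. field. lra.
Qed.

Lemma RInt_le_nested (h : R -> R) (al be x x0 y0 y : R) :
  (forall r, al < r < be -> continuous h r) ->
  (forall r, al < r < be -> 0 <= h r) ->
  al < x <= x0 -> x0 <= y0 -> y0 <= y < be -> RInt h x0 y0 <= RInt h x y.
Proof.
  intros Hc Hp Hx Hxy Hy.
  assert (exh : forall u v, al < u < be -> al < v < be -> ex_RInt h u v)
    by (intros; apply (ex_RInt_open_interval h al be); auto).
  rewrite <- (RInt_Chasles h x x0 y), <- (RInt_Chasles h x0 y0 y) by (apply exh; lra).
  assert (0 <= RInt h x x0) by (apply RInt_ge_0; [lra | apply exh; lra | intros; apply Hp; lra]).
  assert (0 <= RInt h y0 y) by (apply RInt_ge_0; [lra | apply exh; lra | intros; apply Hp; lra]).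
  unfold plus; simpl. lra.
Qed.

Lemma is_RInt_gen_of_bounded_nonneg (h : R -> R) (al be C : R) :
  al < be ->
  (forall r, al < r < be -> continuous h r) ->
  (forall r, al < r < be -> 0 <= h r) ->
  (forall x y, al < x -> x <= y -> y < be -> RInt h x y <= C) ->
  exists l, is_RInt_gen h (at_right al) (at_left be) l /\ l <= C /\
    (forall x y, al < x -> x <= y -> y < be -> RInt h x y <= l).
Proof.
  intros Hab Hc Hp HC.
  set (S := fun v => exists x y, al < x /\ x <= y /\ y < be /\ v = RInt h x y).
  destruct (completeness S) as [l [Hub Hlub]].
  - exists C. intros v (x & y & Hx & Hxy & Hy & ->). auto.
  - exists (RInt h ((al + be) / 2) ((al + be) / 2)).
    exists ((al + be) / 2), ((al + be) / 2). repeat split; lra.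
  - assert (HS : forall x y, al < x -> x <= y -> y < be -> RInt h x y <= l)
      by (intros x y Hx Hxy Hy; apply Hub; exists x, y; auto).
    exists l. split; [|split; [apply Hlub; intros v (x & y & Hx & Hxy & Hy & ->); auto | exact HS]].
    apply (filterlimi_lim_ext_loc (fun ab => RInt h (fst ab) (snd ab))).
    + apply (Filter_prod _ _ _ (fun x => al < x < be) (fun y => al < y < be)).
      * apply at_right_interval with (be - al); [lra | intros; lra].
      * apply at_left_interval with (be - al); [lra | intros; lra].
      * intros x y Hx Hy. apply (RInt_correct (V := R_CompleteNormedModule)).
        apply (ex_RInt_open_interval h al be); auto.
    + apply filterlim_locally. intros eps.
      assert (Hclose : exists x0 y0, al < x0 /\ x0 <= y0 /\ y0 < be /\ l - eps < RInt h x0 y0).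
      { apply NNPP. intros Hn. assert (l <= l - eps); [|destruct eps; simpl in *; lra].
        apply Hlub. intros v (x & y & Hx & Hxy & Hy & ->).
        apply Rnot_lt_le. intros Hv. apply Hn. exists x, y. auto. }
      destruct Hclose as (x0 & y0 & Hx0 & Hxy0 & Hy0 & Hv).
      apply (Filter_prod _ _ _ (fun x => al < x <= x0) (fun y => y0 <= y < be)).
      * apply at_right_interval with (x0 - al); [lra | intros; lra].
      * apply at_left_interval with (be - y0); [lra | intros; lra].
      * intros x y Hx Hy. change (Rabs (RInt h x y - l) < eps).
        assert (RInt h x0 y0 <= RInt h x y) by (apply (RInt_le_nested h al be); auto; lra).
        assert (RInt h x y <= l) by (apply HS; lra).
        rewrite Rabs_left1; lra.
Qed.

Lemma is_RInt_gen_inv_sqrt_singularity (h : R -> R) (al be K : R) :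
  al < be -> 0 <= K ->
  (forall r, al < r < be -> continuous h r) ->
  (forall r, al < r < be -> 0 <= h r) ->
  (forall r, al < r < be -> h r ^ 2 * ((r - al) * (be - r)) <= K ^ 2) ->
  exists l, is_RInt_gen h (at_right al) (at_left be) l /\ l <= 4 * K /\
    (forall x y, al < x -> x <= y -> y < be -> RInt h x y <= l).
Proof.
  intros Hab HK Hc Hp Hb. apply is_RInt_gen_of_bounded_nonneg; auto.
  intros x y Hx Hxy Hy. apply (RInt_le_inv_sqrt_singularity h al be); auto.
Qed.

Lemma RInt_gen_open_interval (h : R -> R) (al be l : R) :
  is_RInt_gen h (at_right al) (at_left be) l -> RInt_gen h (at_right al) (at_left be) = l.
Proof.
  apply (is_RInt_gen_unique (V := R_CompleteNormedModule)); apply Proper_StrongProper.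
Qed.

Lemma is_RInt_inv_dist (z x y : R) :
  x <= y -> y < z -> is_RInt (fun r => / (z - r)) x y (ln (z - x) - ln (z - y)).
Proof.
  intros Hxy Hy.
  replace (ln (z - x) - ln (z - y)) with (minus (- ln (z - y)) (- ln (z - x)))
    by (unfold minus, plus, opp; simpl; ring).
  apply (is_RInt_derive (fun r => - ln (z - r))).
  - intros r Hr. rewrite Rmin_left, Rmax_right in Hr by lra.
    auto_derive; [lra | field; lra].
  - intros r Hr. rewrite Rmin_left, Rmax_right in Hr by lra.
    apply (ex_derive_continuous (fun r => / (z - r))). auto_derive. lra.
Qed.

(** * Roots of cubics *)

Lemma IVT_strict (f : R -> R) (x y : R) :
  continuity f -> x < y -> f x * f y < 0 -> exists z, x < z < y /\ f z = 0.
Proof.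
  intros Hf Hxy Hs.
  destruct (IVT_cor f x y Hf (Rlt_le _ _ Hxy) (Rlt_le _ _ Hs)) as [z [Hz Hfz]].
  exists z. split; [|exact Hfz].
  split; apply Rnot_le_lt; intros Hle; [assert (z = x) by lra | assert (z = y) by lra];
    subst z; rewrite Hfz in Hs; lra.
Qed.

Lemma quadratic_three_roots (al be ga x1 x2 x3 : R) :
  x1 <> x2 -> x1 <> x3 -> x2 <> x3 ->
  al * x1 ^ 2 + be * x1 + ga = 0 -> al * x2 ^ 2 + be * x2 + ga = 0 ->
  al * x3 ^ 2 + be * x3 + ga = 0 ->
  al = 0 /\ be = 0 /\ ga = 0.
Proof.
  intros H12 H13 H23 e1 e2 e3.
  assert (d12 : (x1 - x2) * (al * (x1 + x2) + be) = 0)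
    by (rewrite <- (Rminus_diag_eq _ _ (eq_trans e1 (eq_sym e2))); ring).
  assert (d13 : (x1 - x3) * (al * (x1 + x3) + be) = 0)
    by (rewrite <- (Rminus_diag_eq _ _ (eq_trans e1 (eq_sym e3))); ring).
  apply Rmult_integral in d12 as [ | d12]; [exfalso; apply H12; lra|].
  apply Rmult_integral in d13 as [ | d13]; [exfalso; apply H13; lra|].
  assert (hal : (x2 - x3) * al = 0) by lra.
  apply Rmult_integral in hal as [ | ->]; [exfalso; apply H23; lra|].
  assert (be = 0) as -> by lra.
  repeat split; lra.
Qed.

Lemma cubic_factor (p : R -> R) (k A B C s1 s2 s3 : R) :
  (forall s, p s = k * s ^ 3 + A * s ^ 2 + B * s + C) ->
  s1 <> s2 -> s1 <> s3 -> s2 <> s3 -> p s1 = 0 -> p s2 = 0 -> p s3 = 0 ->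
  forall s, p s = k * (s - s1) * (s - s2) * (s - s3).
Proof.
  intros Hp H12 H13 H23 e1 e2 e3.
  (* [p] minus the factored cubic is a quadratic vanishing at [s1], [s2], [s3] *)
  set (al := A + k * (s1 + s2 + s3)).
  set (be := B - k * (s1 * s2 + s1 * s3 + s2 * s3)).
  set (ga := C + k * s1 * s2 * s3).
  assert (Hrem : forall s, p s = k * (s - s1) * (s - s2) * (s - s3) + (al * s ^ 2 + be * s + ga))
    by (intros s; rewrite Hp; unfold al, be, ga; ring).
  rewrite !Hrem in e1, e2, e3.
  destruct (quadratic_three_roots al be ga s1 s2 s3) as (-> & -> & ->); try lra.
  intros s. rewrite Hrem. ring.
Qed.

Lemma sq_lt_of_sqrt_lt (s r : R) : 0 <= r -> sqrt s < r -> s < r ^ 2.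
Proof. intros Hr Hs. apply sqrt_lt_0_alt. rewrite sqrt_pow2 by exact Hr. exact Hs. Qed.

Lemma sq_lt_of_lt_sqrt (s r : R) : 0 <= r -> r < sqrt s -> r ^ 2 < s.
Proof. intros Hr Hs. apply sqrt_lt_0_alt. rewrite sqrt_pow2 by exact Hr. exact Hs. Qed.

(** * The radial equation at a fixed energy *)

Definition energy_cubic (a b J E s : R) : R :=
  E * s - J ^ 2 / 2 - a * s ^ 2 / 2 - b * s ^ 3 / 4.

Lemma VJ_energy_cubic (a b J E r : R) :
  r <> 0 -> E - VJ a b J r = energy_cubic a b J E (r ^ 2) / r ^ 2.
Proof. intros Hr. unfold VJ, energy_cubic. field. exact Hr. Qed.

Lemma energy_cubic_continuous (a b J E : R) : continuity (energy_cubic a b J E).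
Proof.
  intros s. apply continuity_pt_filterlim, (ex_derive_continuous (energy_cubic a b J E)).
  unfold energy_cubic. auto_derive. exact I.
Qed.

Lemma three_roots_unique (a b J E x1 x2 x3 y1 y2 y3 : R) :
  three_roots a b J E (x1, x2, x3) -> three_roots a b J E (y1, y2, y3) ->
  (x1, x2, x3) = (y1, y2, y3).
Proof.
  intros (hx1 & hx2 & hx3 & Hx) (hy1 & hy2 & hy3 & Hy).
  assert (xy : forall z, z = x1 \/ z = x2 \/ z = x3 -> z = y1 \/ z = y2 \/ z = y3)
    by (intros z Hz; assert (0 < z) by lra; apply Hy, Hx; assumption).
  assert (yx : forall z, z = y1 \/ z = y2 \/ z = y3 -> z = x1 \/ z = x2 \/ z = x3)
    by (intros z Hz; assert (0 < z) by lra; apply Hx, Hy; assumption).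
  assert (e1 : x1 = y1).
  { destruct (xy x1) as [|[|]]; [now left | ..];
      destruct (yx y1) as [|[|]]; (now left) || lra. }
  assert (e3 : x3 = y3).
  { destruct (xy x3) as [|[|]]; [now right; right | ..];
      destruct (yx y3) as [|[|]]; (now right; right) || lra. }
  assert (e2 : x2 = y2).
  { destruct (xy x2) as [|[|]]; [now right; left | ..]; lra. }
  now rewrite e1, e2, e3.
Qed.

Lemma roots_of_three_roots (a b J E : R) (t : R * R * R) :
  three_roots a b J E t -> roots a b J E = t.
Proof.
  intros Ht.
  assert (Hr := epsilon_spec (inhabits (0, 0, 0)) (three_roots a b J E) (ex_intro _ _ Ht)).
  fold (roots a b J E) in Hr.
  destruct (roots a b J E) as [[y1 y2] y3], t as [[x1 x2] x3].
  symmetry. apply (three_roots_unique a b J E); assumption.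
Qed.

Definition inv_speed (a b J E r : R) : R := / sqrt (2 * (E - VJ a b J r)).

Lemma inv_speed_continuous (a b J E r : R) :
  r <> 0 -> VJ a b J r < E -> continuous (inv_speed a b J E) r.
Proof.
  intros Hr HE. apply (ex_derive_continuous (inv_speed a b J E)).
  assert (HX : 0 < 2 * (E - VJ a b J r)) by lra.
  unfold inv_speed, VJ, Rminus, Rdiv in *. simpl in HX. auto_derive.
  assert (r * (r * 1) <> 0) by (rewrite Rmult_1_r; apply Rmult_integral_contrapositive; auto).
  repeat split; auto. apply Rgt_not_eq, sqrt_lt_R0, HX.
Qed.

Section FixedEnergy.

Variables (a b J E c s1 s2 s3 : R).
Hypotheses (hc : 0 < c) (hs1 : 0 < s1) (hs12 : s1 < s2) (hs23 : s2 < s3).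
Hypothesis energy_cubic_factor :
  forall s, energy_cubic a b J E s = c * (s - s1) * (s - s2) * (s - s3).

Lemma VJ_factor (r : R) :
  r <> 0 -> (E - VJ a b J r) * r ^ 2 = c * (r ^ 2 - s1) * (r ^ 2 - s2) * (r ^ 2 - s3).
Proof.
  intros Hr. rewrite VJ_energy_cubic, energy_cubic_factor by exact Hr.
  field. exact Hr.
Qed.

Lemma three_roots_sqrt : three_roots a b J E (sqrt s1, sqrt s2, sqrt s3).
Proof.
  assert (Hsq : forall r s, 0 < r -> 0 <= s -> (r ^ 2 = s <-> r = sqrt s)).
  { intros r s Hr Hs. split; [intros <-; rewrite sqrt_pow2 | intros ->; rewrite pow2_sqrt]; lra. }
  split; [apply sqrt_lt_R0; lra|].
  split; [apply sqrt_lt_1_alt; lra|].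
  split; [apply sqrt_lt_1_alt; lra|].
  intros r Hr. rewrite VJ_energy_cubic, energy_cubic_factor by lra.
  rewrite <- !Hsq by lra.
  assert (Hr2 : r ^ 2 <> 0) by (apply pow_nonzero; lra).
  split.
  - intros H0. unfold Rdiv in H0.
    apply Rmult_integral in H0 as [H0 | H0]; [| apply Rinv_neq_0_compat in Hr2; contradiction].
    apply Rmult_integral in H0 as [H0 | H0]; [| right; right; lra].
    apply Rmult_integral in H0 as [H0 | H0]; [| right; left; lra].
    apply Rmult_integral in H0 as [H0 | H0]; [lra | left; lra].
  - intros [-> | [-> | ->]]; unfold Rdiv; ring.
Qed.

Lemma root1_sqrt : root1 a b J E = sqrt s1.
Proof. unfold root1. now rewrite (roots_of_three_roots _ _ _ _ _ three_roots_sqrt). Qed.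

Lemma root2_sqrt : root2 a b J E = sqrt s2.
Proof. unfold root2. now rewrite (roots_of_three_roots _ _ _ _ _ three_roots_sqrt). Qed.

Lemma VJ_lt_between_roots (r : R) : sqrt s1 < r < sqrt s2 -> VJ a b J r < E.
Proof.
  intros Hr.
  assert (0 <= sqrt s1) by apply sqrt_pos.
  assert (h1 := sq_lt_of_sqrt_lt s1 r ltac:(lra) ltac:(lra)).
  assert (h2 := sq_lt_of_lt_sqrt s2 r ltac:(lra) ltac:(lra)).
  assert (Hf := VJ_factor r ltac:(lra)).
  assert (0 < c * (r ^ 2 - s1) * ((s2 - r ^ 2) * (s3 - r ^ 2))).
  { apply Rmult_lt_0_compat; [apply Rmult_lt_0_compat|apply Rmult_lt_0_compat]; lra. }
  assert (0 < r ^ 2) by lra.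
  nra.
Qed.

(* The factorisation makes [(w / sqrt (2 (E - VJ)))^2 (r - r1) (r2 - r)] equal to
   [w^2 r^2 / (2 c (r + r1) (r + r2) (s3 - r^2))]. *)
Lemma weighted_inv_speed_sq_bound (w W r : R) :
  sqrt s1 < r < sqrt s2 -> w ^ 2 <= W * (s3 - r ^ 2) ->
  (w * inv_speed a b J E r) ^ 2 * ((r - sqrt s1) * (sqrt s2 - r)) <= W / (2 * c).
Proof.
  intros Hr Hw.
  set (r1 := sqrt s1) in *. set (r2 := sqrt s2) in *.
  assert (hr1 : 0 <= r1) by apply sqrt_pos.
  assert (e1 : s1 = r1 ^ 2) by (unfold r1; rewrite pow2_sqrt; lra).
  assert (e2 : s2 = r2 ^ 2) by (unfold r2; rewrite pow2_sqrt; lra).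
  assert (HX := VJ_lt_between_roots r Hr).
  assert (Hf := VJ_factor r ltac:(lra)).
  set (X := E - VJ a b J r) in Hf.
  assert (hX : 0 < X) by (unfold X; lra).
  set (P := (r - r1) * (r2 - r)).
  assert (hP : 0 < P) by (apply Rmult_lt_0_compat; lra).
  assert (hs3 : 0 < s3 - r ^ 2) by nra.
  unfold inv_speed. fold X.
  rewrite Rpow_mult_distr, pow_inv, pow2_sqrt by lra.
  assert (HXP : X * r ^ 2 = c * P * ((r + r1) * (r + r2) * (s3 - r ^ 2)))
    by (rewrite Hf, e1, e2; unfold P; ring).
  assert (Hwr : w ^ 2 * r ^ 2 <= W * (s3 - r ^ 2) * ((r + r1) * (r + r2))).
  { apply Rle_trans with (W * (s3 - r ^ 2) * r ^ 2); [nra|].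
    assert (0 <= W) by nra. apply Rmult_le_compat_l; nra. }
  assert (Hmain : w ^ 2 * P * (2 * c) * r ^ 2 <= W * (2 * X) * r ^ 2).
  { replace (W * (2 * X) * r ^ 2) with (2 * c * P * (W * (s3 - r ^ 2) * ((r + r1) * (r + r2))))
      by (replace (W * (2 * X) * r ^ 2) with (2 * W * (X * r ^ 2)) by ring; rewrite HXP; ring).
    replace (w ^ 2 * P * (2 * c) * r ^ 2) with (2 * c * P * (w ^ 2 * r ^ 2)) by ring.
    apply Rmult_le_compat_l; nra. }
  assert (hr : 0 < r ^ 2) by (apply pow_lt; lra).
  apply Rmult_le_reg_r with (2 * c * (2 * X) * r ^ 2); [apply Rmult_lt_0_compat; nra|].
  replace (w ^ 2 * / (2 * X) * P * (2 * c * (2 * X) * r ^ 2))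
    with (w ^ 2 * P * (2 * c) * r ^ 2) by (field; lra).
  replace (W / (2 * c) * (2 * c * (2 * X) * r ^ 2)) with (W * (2 * X) * r ^ 2) by (field; lra).
  exact Hmain.
Qed.

Lemma weighted_inv_speed_integral (w : R -> R) (W : R) :
  0 <= W -> (forall r, ex_derive w r) ->
  (forall r, sqrt s1 < r < sqrt s2 -> 0 <= w r /\ w r ^ 2 <= W * (s3 - r ^ 2)) ->
  exists l,
    is_RInt_gen (fun r => w r * inv_speed a b J E r) (at_right (sqrt s1)) (at_left (sqrt s2)) l /\
    l <= 4 * sqrt (W / (2 * c)) /\
    forall x y, sqrt s1 < x -> x <= y -> y < sqrt s2 ->
      RInt (fun r => w r * inv_speed a b J E r) x y <= l.
Proof.
  intros HW Hd Hw.
  assert (0 <= sqrt s1) by apply sqrt_pos.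
  apply is_RInt_gen_inv_sqrt_singularity.
  - apply sqrt_lt_1_alt. lra.
  - apply sqrt_pos.
  - intros r Hr. apply (continuous_mult (K := R_AbsRing) w).
    + exact (ex_derive_continuous w r (Hd r)).
    + apply inv_speed_continuous; [lra | now apply VJ_lt_between_roots].
  - intros r Hr. apply Rmult_le_pos; [apply Hw, Hr|].
    apply Rlt_le, Rinv_0_lt_compat, sqrt_lt_R0.
    assert (VJ a b J r < E) by (now apply VJ_lt_between_roots). lra.
  - intros r Hr. rewrite pow2_sqrt by (apply Rdiv_le_0_compat; lra).
    apply weighted_inv_speed_sq_bound; [exact Hr | apply Hw, Hr].
Qed.

Lemma is_RInt_gen_inv_speed :
  exists l, is_RInt_gen (inv_speed a b J E) (at_right (sqrt s1)) (at_left (sqrt s2)) l /\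
    forall x y, sqrt s1 < x -> x <= y -> y < sqrt s2 -> RInt (inv_speed a b J E) x y <= l.
Proof.
  destruct (weighted_inv_speed_integral (fun _ => 1) (/ (s3 - s2))) as (l & Hl & _ & Hle).
  - apply Rlt_le, Rinv_0_lt_compat. lra.
  - intros r. auto_derive. exact I.
  - intros r Hr. split; [lra|].
    assert (r ^ 2 < s2) by (apply sq_lt_of_lt_sqrt; [pose proof (sqrt_pos s1) |]; lra).
    replace (/ (s3 - s2) * (s3 - r ^ 2)) with ((s3 - r ^ 2) / (s3 - s2)) by (field; lra).
    rewrite pow1. apply Rle_div_r; lra.
  - exists l. split.
    + eapply is_RInt_gen_ext; [| exact Hl].
      apply filter_forall. intros ab r _. apply Rmult_1_l.
    + intros x y Hx Hxy Hy. rewrite <- (Hle x y Hx Hxy Hy).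
      right. apply RInt_ext. intros r _. symmetry. apply Rmult_1_l.
Qed.

Lemma Tper_sqrt_roots (l : R) :
  is_RInt_gen (inv_speed a b J E) (at_right (sqrt s1)) (at_left (sqrt s2)) l ->
  Tper a b J E = 2 * l.
Proof.
  intros Hl. unfold Tper. rewrite root1_sqrt, root2_sqrt.
  change (2 * RInt_gen (inv_speed a b J E) (at_right (sqrt s1)) (at_left (sqrt s2)) = 2 * l).
  now rewrite (RInt_gen_open_interval _ _ _ _ Hl).
Qed.

Lemma half_rho_Tper_sub_Mtil_bounded (rho : R) :
  s2 <= rho <= s3 -> 0 <= rho / 2 * Tper a b J E - Mtil a b J E <= 4 * sqrt (rho / (2 * c)).
Proof.
  intros Hrho.
  destruct is_RInt_gen_inv_speed as (l1 & H1 & _).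
  destruct (weighted_inv_speed_integral (fun r => rho - r ^ 2) rho) as (l3 & H3 & B3 & L3).
  - lra.
  - intros r. auto_derive. exact I.
  - intros r Hr. assert (0 <= sqrt s1) by apply sqrt_pos.
    assert (r ^ 2 < s2) by (apply sq_lt_of_lt_sqrt; lra).
    assert (0 < r ^ 2) by (apply pow_lt; lra).
    split; [lra | nra].
  - (* [r^2 = rho - (rho - r^2)] splits the mass integral *)
    assert (H2 : is_RInt_gen (fun r => r ^ 2 * inv_speed a b J E r)
                   (at_right (sqrt s1)) (at_left (sqrt s2)) (rho * l1 - l3)).
    { assert (Hd := is_RInt_gen_minus _ _ _ _ (is_RInt_gen_scal _ rho _ H1) H3).
      eapply is_RInt_gen_ext; [| exact Hd].
      apply filter_forall. intros ab r _.
      unfold minus, plus, opp, scal; simpl; unfold mult; simpl. ring. }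
    assert (HM : Mtil a b J E = rho * l1 - l3).
    { unfold Mtil. rewrite root1_sqrt, root2_sqrt. exact (RInt_gen_open_interval _ _ _ _ H2). }
    assert (0 <= l3).
    { set (x := (sqrt s1 + sqrt s2) / 2).
      assert (sqrt s1 < sqrt s2) by (apply sqrt_lt_1_alt; lra).
      assert (H0 : RInt (fun r => (rho - r ^ 2) * inv_speed a b J E r) x x = 0)
        by exact (RInt_point x _).
      rewrite <- H0. apply L3; unfold x; lra. }
    rewrite (Tper_sqrt_roots l1 H1), HM. split; lra.
Qed.

End FixedEnergy.

(** * Energies just below the separatrix *)

Section NearSeparatrix.

Variables (a b q J : R).
Hypotheses (hb : b < 0) (hq0 : 0 < q) (hq1 : q ^ 2 < a / 3)
  (hJq : J = q * (q ^ 2 - a) / b).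

Let c := - b / 4.
Let rho := (q ^ 2 - a) / b.
Let sig := - 2 * q ^ 2 / b.
Let m := (sig + rho) / 2.

Lemma energy_cubic_Eplus (E s : R) :
  energy_cubic a b J E s = c * (s - rho) ^ 2 * (s - sig) - (Eplus_J a b q - E) * s.
Proof. rewrite hJq. unfold energy_cubic, Eplus_J, c, rho, sig. field. lra. Qed.

Lemma c_pos : 0 < c.
Proof. unfold c. lra. Qed.

Lemma sig_pos : 0 < sig.
Proof.
  unfold sig. replace (- 2 * q ^ 2 / b) with (2 * q ^ 2 / - b) by (field; lra).
  apply Rdiv_lt_0_compat; [nra | lra].
Qed.

Lemma sig_lt_rho : sig < rho.
Proof.
  unfold sig, rho. apply Rmult_lt_reg_l with (- b); [lra|].
  replace (- b * (- 2 * q ^ 2 / b)) with (2 * q ^ 2) by (field; lra).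
  replace (- b * ((q ^ 2 - a) / b)) with (a - q ^ 2) by (field; lra).
  lra.
Qed.

Lemma energy_cubic_pos_near_Eplus (s : R) :
  sig < s -> s <> rho -> at_left (Eplus_J a b q) (fun E => 0 < energy_cubic a b J E s).
Proof.
  intros Hs Hrho.
  assert (hs : 0 < s) by (pose proof sig_pos; lra).
  assert (hd : 0 < c * (s - rho) ^ 2 * (s - sig)).
  { assert (0 < (s - rho) ^ 2) by (rewrite <- Rsqr_pow2; apply Rsqr_pos_lt; intro; apply Hrho; lra).
    pose proof c_pos. apply Rmult_lt_0_compat; [nra | lra]. }
  apply at_left_interval with (c * (s - rho) ^ 2 * (s - sig) / s); [apply Rdiv_lt_0_compat; lra|].
  intros E HE. rewrite energy_cubic_Eplus.
  assert (HE' : (Eplus_J a b q - E) * s < c * (s - rho) ^ 2 * (s - sig) / s * s)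
    by (apply Rmult_lt_compat_r; lra).
  replace (c * (s - rho) ^ 2 * (s - sig) / s * s) with (c * (s - rho) ^ 2 * (s - sig))
    in HE' by (field; lra).
  lra.
Qed.

Lemma roots_near_Eplus (mu1 mu2 : R) :
  sig < mu1 <= mu2 -> mu2 < rho ->
  at_left (Eplus_J a b q) (fun E => exists s1 s2 s3,
    sig < s1 < mu1 /\ mu2 < s2 < rho /\ rho < s3 /\
    forall s, energy_cubic a b J E s = c * (s - s1) * (s - s2) * (s - s3)).
Proof.
  intros Hmu1 Hmu2.
  pose proof sig_pos. pose proof sig_lt_rho. pose proof c_pos.
  assert (P1 := energy_cubic_pos_near_Eplus mu1 ltac:(lra) ltac:(lra)).
  assert (P2 := energy_cubic_pos_near_Eplus mu2 ltac:(lra) ltac:(lra)).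
  assert (P3 := energy_cubic_pos_near_Eplus (2 * rho) ltac:(lra) ltac:(lra)).
  generalize (filter_and _ _ (filter_and _ _ P1 P2) (filter_and _ _ P3 (at_left_lt _))).
  apply filter_imp. intros E [[Q1 Q2] [Q3 HE]].
  assert (Nsig : energy_cubic a b J E sig < 0)
    by (rewrite energy_cubic_Eplus; replace (sig - sig) with 0 by ring; nra).
  assert (Nrho : energy_cubic a b J E rho < 0)
    by (rewrite energy_cubic_Eplus; replace (rho - rho) with 0 by ring; nra).
  assert (Hc := energy_cubic_continuous a b J E).
  destruct (IVT_strict _ sig mu1 Hc) as (s1 & Hs1 & e1); [lra | nra |].
  destruct (IVT_strict _ mu2 rho Hc) as (s2 & Hs2 & e2); [lra | nra |].
  destruct (IVT_strict _ rho (2 * rho) Hc) as (s3 & Hs3 & e3); [lra | nra |].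
  exists s1, s2, s3. repeat split; try lra.
  apply (cubic_factor _ c (- a / 2) E (- J ^ 2 / 2)); try (intro; lra); try assumption.
  intros s. unfold energy_cubic, c. field.
Qed.

Lemma half_rho_Tper_sub_Mtil_bounded_near_Eplus :
  at_left (Eplus_J a b q) (fun E =>
    0 <= rho / 2 * Tper a b J E - Mtil a b J E <= 4 * sqrt (rho / (2 * c))).
Proof.
  pose proof sig_pos. pose proof sig_lt_rho.
  apply filter_imp with (2 := roots_near_Eplus m m ltac:(unfold m; lra) ltac:(unfold m; lra)).
  intros E (s1 & s2 & s3 & Hs1 & Hs2 & Hs3 & Hf).
  apply (half_rho_Tper_sub_Mtil_bounded a b J E c s1 s2 s3); try assumption; try lra. apply c_pos.
Qed.

Lemma E_sub_VJ_le (E r : R) :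
  E < Eplus_J a b q -> r <> 0 -> E - VJ a b J r <= c * (rho - r ^ 2) ^ 2.
Proof.
  intros HE Hr. rewrite VJ_energy_cubic, energy_cubic_Eplus by exact Hr.
  pose proof sig_pos. pose proof c_pos.
  assert (hr : 0 < r ^ 2) by (rewrite <- Rsqr_pow2; apply Rsqr_pos_lt, Hr).
  apply Rle_div_l; [lra|].
  replace ((r ^ 2 - rho) ^ 2) with ((rho - r ^ 2) ^ 2) by ring.
  assert (0 <= c * (rho - r ^ 2) ^ 2) by (apply Rmult_le_pos; [lra | apply pow2_ge_0]).
  nra.
Qed.

Lemma RInt_inv_speed_ge_log (E x y : R) :
  E < Eplus_J a b q -> 0 < x -> x <= y -> y < sqrt rho ->
  (forall r, x <= r <= y -> VJ a b J r < E) ->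
  / sqrt (8 * c * rho) * (ln (sqrt rho - x) - ln (sqrt rho - y)) <= RInt (inv_speed a b J E) x y.
Proof.
  intros HE Hx Hxy Hy HV.
  pose proof sig_pos. pose proof sig_lt_rho. pose proof c_pos.
  set (k := / sqrt (8 * c * rho)).
  assert (hk : 0 < sqrt (8 * c * rho)) by (apply sqrt_lt_R0; nra).
  assert (Hlog : is_RInt (fun r => k * / (sqrt rho - r)) x y
                   (k * (ln (sqrt rho - x) - ln (sqrt rho - y))))
    by exact (is_RInt_scal _ x y k _ (is_RInt_inv_dist (sqrt rho) x y Hxy Hy)).
  rewrite <- (is_RInt_unique _ _ _ _ Hlog).
  apply RInt_le; [exact Hxy | eexists; exact Hlog | |].
  - apply (ex_RInt_continuous (V := R_CompleteNormedModule)). intros r Hr.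
    rewrite Rmin_left, Rmax_right in Hr by lra.
    apply inv_speed_continuous; [lra | apply HV; lra].
  - intros r Hr.
    assert (HVr := HV r ltac:(lra)).
    assert (Hgap := E_sub_VJ_le E r HE ltac:(lra)).
    assert (hrho : 0 < rho) by lra.
    assert (ht : 0 < sqrt rho) by (apply sqrt_lt_R0; lra).
    assert (ers : sqrt rho ^ 2 = rho) by (apply pow2_sqrt; lra).
    assert (H2X : 2 * (E - VJ a b J r) <= (sqrt (8 * c * rho) * (sqrt rho - r)) ^ 2).
    { rewrite Rpow_mult_distr, pow2_sqrt by nra.
      set (t := sqrt rho) in *.
      assert (Hd : 0 <= rho - r ^ 2 <= 2 * t * (t - r)) by nra.
      assert ((rho - r ^ 2) ^ 2 <= (2 * t * (t - r)) ^ 2) by (apply pow_incr; lra).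
      replace ((2 * t * (t - r)) ^ 2) with (4 * rho * (t - r) ^ 2) in * by (rewrite <- ers; ring).
      nra. }
    unfold inv_speed, k.
    replace (/ sqrt (8 * c * rho) * / (sqrt rho - r)) with (/ (sqrt (8 * c * rho) * (sqrt rho - r)))
      by (field; lra).
    apply Rinv_le_contravar; [apply sqrt_lt_R0; lra|].
    rewrite <- (sqrt_pow2 (sqrt (8 * c * rho) * (sqrt rho - r))) by nra.
    apply sqrt_le_1_alt. exact H2X.
Qed.

Lemma Tper_ge_log (y : R) :
  sqrt m <= y < sqrt rho ->
  at_left (Eplus_J a b q) (fun E =>
    2 * (/ sqrt (8 * c * rho) * (ln (sqrt rho - sqrt m) - ln (sqrt rho - y))) <= Tper a b J E).
Proof.
  intros Hy.
  pose proof sig_pos. pose proof sig_lt_rho. pose proof c_pos.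
  assert (hm : 0 < sqrt m) by (apply sqrt_lt_R0; unfold m; lra).
  assert (Hy2 : m <= y ^ 2 < rho).
  { split; [|apply sq_lt_of_lt_sqrt; lra].
    rewrite <- (pow2_sqrt m) by (unfold m; lra). apply pow_incr. lra. }
  assert (Hroots := roots_near_Eplus m (y ^ 2) ltac:(unfold m in *; lra) ltac:(lra)).
  generalize (filter_and _ _ Hroots (at_left_lt _)). apply filter_imp.
  intros E [(s1 & s2 & s3 & Hs1 & Hs2 & Hs3 & Hf) HE].
  destruct (is_RInt_gen_inv_speed a b J E c s1 s2 s3) as (l & Hl & Hle); try assumption; try lra.
  rewrite (Tper_sqrt_roots a b J E c s1 s2 s3) with (l := l); try assumption; try lra.
  assert (sqrt s1 < sqrt m) by (apply sqrt_lt_1_alt; lra).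
  assert (y < sqrt s2) by (rewrite <- (sqrt_pow2 y) by lra; apply sqrt_lt_1_alt; lra).
  apply Rmult_le_compat_l; [lra|].
  apply Rle_trans with (RInt (inv_speed a b J E) (sqrt m) y); [|apply Hle; lra].
  apply RInt_inv_speed_ge_log; try lra.
  intros r Hr. apply (VJ_lt_between_roots a b J E c s1 s2 s3); try assumption; lra.
Qed.

Lemma Tper_pinfty : filterlim (Tper a b J) (at_left (Eplus_J a b q)) (Rbar_locally p_infty).
Proof.
  pose proof sig_pos. pose proof sig_lt_rho. pose proof c_pos.
  apply filterlim_p_infty_intro. intros N.
  set (k := / sqrt (8 * c * rho)).
  assert (hk : 0 < k) by (apply Rinv_0_lt_compat, sqrt_lt_R0; nra).
  set (L := sqrt rho - sqrt m).
  assert (hL : 0 < L)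
    by (assert (sqrt m < sqrt rho) by (apply sqrt_lt_1_alt; unfold m; lra); unfold L; lra).
  set (n := Rabs N / (2 * k) + 1).
  assert (hn : 1 <= n).
  { assert (0 <= Rabs N / (2 * k)) by (apply Rdiv_le_0_compat; [apply Rabs_pos | lra]).
    unfold n. lra. }
  assert (hexp : 0 < exp (- n) < 1)
    by (split; [apply exp_pos | rewrite <- exp_0; apply exp_increasing; lra]).
  (* [y] is chosen so that [ln (sqrt rho - sqrt m) - ln (sqrt rho - y) = n] *)
  assert (Hy : sqrt m <= sqrt rho - L * exp (- n) < sqrt rho)
    by (assert (0 < L * exp (- n) < L) by nra; unfold L in *; lra).
  apply filter_imp with (2 := Tper_ge_log _ Hy).
  intros E HT.
  replace (sqrt rho - (sqrt rho - L * exp (- n))) with (L * exp (- n)) in HT by ring.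
  fold k L in HT. rewrite ln_mult, ln_exp in HT by (try apply exp_pos; lra).
  assert (N <= Rabs N) by apply Rle_abs.
  replace (2 * (k * (ln L - (ln L + - n)))) with (Rabs N + 2 * k) in HT by (unfold n; field; lra).
  lra.
Qed.

End NearSeparatrix.

Theorem proposition2 (a b J q : R)
  (ha : 0 < a) (hb : b < 0)
  (hJ0 : 0 < J) (hJ1 : J < sqrt (4 / 27 * a ^ 3 / b ^ 2))
  (hq0 : 0 < q) (hq1 : q ^ 2 < a / 3) (hJq : J = q * (q ^ 2 - a) / b) :
  filterlim (fun E => Tper a b J E) (at_left (Eplus_J a b q)) (Rbar_locally p_infty) /\
  filterlim (fun E => Mtil a b J E) (at_left (Eplus_J a b q)) (Rbar_locally p_infty) /\
  filterlim (fun E => Mtil a b J E / Tper a b J E) (at_left (Eplus_J a b q))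
    (locally ((q ^ 2 - a) / (2 * b))) /\
  filterlim (fun E => Ptil a b J E) (at_left (Eplus_J a b q)) (Rbar_locally p_infty) /\
  filterlim (fun E => Ptil a b J E / Tper a b J E) (at_left (Eplus_J a b q))
    (locally (q * (q ^ 2 - a) / (2 * b))).
Proof.
  (* [hJ1] is a consequence of the remaining hypotheses. *)
  assert (HT := Tper_pinfty a b q J hb hq0 hq1 hJq).
  assert (HM := half_rho_Tper_sub_Mtil_bounded_near_Eplus a b q J hb hq0 hq1 hJq).
  set (rho := (q ^ 2 - a) / b) in HM.
  set (B := 4 * sqrt (rho / (2 * (- b / 4)))) in HM.
  assert (hrho : 0 < rho).
  { unfold rho. replace ((q ^ 2 - a) / b) with ((a - q ^ 2) / - b) by (field; lra).
    apply Rdiv_lt_0_compat; lra. }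
  split; [exact HT|]. split; [|split; [|split]].
  - apply filterlim_ge_p_infty with (f := fun E => rho / 2 * Tper a b J E + - B).
    + apply filter_imp with (2 := HM). intros E HE. lra.
    + apply filterlim_p_infty_affine; [lra | exact HT].
  - replace ((q ^ 2 - a) / (2 * b)) with (rho / 2) by (unfold rho; field; lra).
    apply filterlim_div_of_bounded_gap with B; [exact HT|].
    apply filter_imp with (2 := HM). intros E HE. apply Rabs_le. lra.
  - apply filterlim_ge_p_infty with (f := fun E => J / 2 * Tper a b J E + 0).
    + apply filter_forall. intros E. unfold Ptil. lra.
    + apply filterlim_p_infty_affine; [lra | exact HT].
  - replace (q * (q ^ 2 - a) / (2 * b)) with (J / 2) by (rewrite hJq; field; lra).
    apply filterlim_div_of_bounded_gap with 0; [exact HT|].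
    apply filter_forall. intros E. unfold Ptil.
    replace (/ 2 * Tper a b J E * J - J / 2 * Tper a b J E) with 0 by field.
    rewrite Rabs_R0. lra.
Qed.
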